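(* Let $A$, $B$, $C$ be commutative $\mathbf{K}$-algebras, let $D$ and $E$ be associative $\mathbf{K}$-algebras equipped with algebra homomorphisms $\alpha\colon A\otimes B\to Z(D)$ and $\beta\colon B\otimes C\to Z(E)$ (so that $B$ acts centrally on $D$ via $b\mapsto\alpha(1\otimes b)$ and on $E$ via $b\mapsto\beta(b\otimes 1)$). Let $D\otimes_B E$ be the tensor product over $B$, which is an associative algebra. Then the fusion $D\circledast_B E$ equals $D\otimes_B E$ acting on itself by left multiplication; that is, the map $\rho\colon D\otimes_B E\to \mathrm{End}_{\mathbf{K}}(D\otimes_B E)$, $\rho(\xi)(\eta)=\xi\eta$, is an injective algebra homomorphism whose image is exactly $D\circledast_B E$.
   Context: Fusion of associative algebras: given associative $\mathbf{K}$-algebras $D$, $E$, $B$ with algebra homomorphisms $B^{\mathrm{op}}\to D$ and $B\to E$ (here $B$ is commutative, so $B^{\mathrm{op}}=B$, and the maps are the ones induced by $\alpha$ and $\beta$), the fusion $D\circledast_B E$ is the subalgebra of $\mathrm{End}_{\mathbf{K}}(D\otimes_B E)$ generated by $(D\cap (B^{\mathrm{op}})')\cup(B'\cap E)$, where $D\cap(B^{\mathrm{op}})'$ is the commutant in $D$ of the image of $B$, $B'\cap E$ is the commutant in $E$ of the image of $B$, and an element $d$ of $D$ (resp. $e$ of $E$) acts on $D\otimes_B E$ by $\delta\otimes_B\epsilon\mapsto d\delta\otimes_B\epsilon$ (resp. $\delta\otimes_B\epsilon\mapsto\delta\otimes_B e\epsilon$). *)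

From HB Require Import structures.
From mathcomp Require Import all_boot all_order all_algebra.
Set Implicit Arguments. Unset Strict Implicit. Unset Printing Implicit Defensive.
Import GRing.Theory.
Local Open Scope ring_scope.

(* Tensor product D (x)_B E of a right B-module D and a left B-module E
   (B acting through the algebra maps bD : B -> D and bE : B -> E),
   given by its universal property: T is a K-module with a K-bilinear,
   B-balanced map t : D -> E -> T (t d e = "d (x)_B e") through which every
   K-bilinear B-balanced map factors uniquely by a K-linear map. *)
Definition bilinear_balanced (K : fieldType) (B : comAlgType K)
    (D E : algType K) (bD : B -> D) (bE : B -> E) (M : lmodType K)
    (f : D -> E -> M) : Prop :=
  [/\ forall e, linear (fun d => f d e),
      forall d, linear (f d)
    & forall d b e, f (d * bD b) e = f d (bE b * e)].

Definition is_tensor_over (K : fieldType) (B : comAlgType K)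
    (D E : algType K) (bD : B -> D) (bE : B -> E) (T : lmodType K)
    (t : D -> E -> T) : Prop :=
  bilinear_balanced bD bE t /\
  forall (M : lmodType K) (f : D -> E -> M),
    bilinear_balanced bD bE f ->
    exists g : {linear T -> M},
      (forall d e, g (t d e) = f d e) /\
      (forall g' : {linear T -> M}, (forall d e, g' (t d e) = f d e) ->
         forall x, g' x = g x).

Definition is_tensor_algebra (K : fieldType) (B : comAlgType K)
    (D E : algType K) (bD : B -> D) (bE : B -> E) (T : algType K)
    (t : D -> E -> T) : Prop :=
  [/\ is_tensor_over bD bE t,
      t 1 1 = 1
    & forall d d' e e', t (d * d') (e * e') = t d e * t d' e'].

(* The K-subalgebra of End_K(T) (K-linear maps T -> T, with composition)
   generated by a set P of endomorphisms; functions are compared pointwise. *)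
Inductive gen_subalg (K : fieldType) (T : lmodType K) (P : (T -> T) -> Prop)
  : (T -> T) -> Prop :=
| gen_base f : P f -> gen_subalg P f
| gen_id : gen_subalg P id
| gen_lin a f g : gen_subalg P f -> gen_subalg P g ->
    gen_subalg P (fun x => a *: f x + g x)
| gen_comp f g : gen_subalg P f -> gen_subalg P g -> gen_subalg P (f \o g)
| gen_ext f g : gen_subalg P f -> (forall x, f x = g x) -> gen_subalg P g.

Definition fusion (K : fieldType) (B : comAlgType K)
    (D E : algType K) (bD : B -> D) (bE : B -> E) (T : lmodType K)
    (t : D -> E -> T) : (T -> T) -> Prop :=
  gen_subalg (fun f : T -> T =>
    (exists d : D, (forall b, d * bD b = bD b * d) /\ linear f /\
        forall x y, f (t x y) = t (d * x) y) \/
    (exists e : E, (forall b, e * bE b = bE b * e) /\ linear f /\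
        forall x y, f (t x y) = t x (e * y))).

From HB Require Import structures.
From mathcomp Require Import all_boot all_order all_algebra.
From mathcomp Require Import boolp.
Set Implicit Arguments. Unset Strict Implicit. Unset Printing Implicit Defensive.
Import GRing.Theory.
Local Open Scope ring_scope.

(* Left multiplication by an element of D (x)_B E is a linear map agreeing on
   pure tensors with a composite of generators, namely d (x) e acts as
   (d (x) 1) o (1 (x) e); since pure tensors span, every rho xi lies in the
   fusion.  Conversely, each generator of the fusion agrees on pure tensors
   with left multiplication by d (x) 1 or 1 (x) e, hence equals it by the
   uniqueness in the universal property, and left multiplications are closed
   under the operations generating the fusion. *)

Section TensorOver.
Variables (K : fieldType) (B : comAlgType K) (D E : algType K).
Variables (bD : B -> D) (bE : B -> E) (T : lmodType K) (t : D -> E -> T).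
Hypothesis tensorT : is_tensor_over bD bE t.

Lemma bilinear_balanced_comp (M : lmodType K) (f : T -> M) :
  linear f -> bilinear_balanced bD bE (fun d e => f (t d e)).
Proof.
case: tensorT => -[tl tr tbal] _ lin_f; split.
- by move=> e a d d'; rewrite tl lin_f.
- by move=> d a e e'; rewrite tr lin_f.
- by move=> d b e; rewrite tbal.
Qed.

Lemma tensor_linear_ext (M : lmodType K) (f g : T -> M) :
  linear f -> linear g -> (forall d e, f (t d e) = g (t d e)) -> f =1 g.
Proof.
move=> lin_f lin_g eq_fg x.
have [h [_ h_unique]] := tensorT.2 M _ (bilinear_balanced_comp lin_f).
pose fL : {linear T -> M} := HB.pack f (GRing.isLinear.Build _ _ _ _ f lin_f).
pose gL : {linear T -> M} := HB.pack g (GRing.isLinear.Build _ _ _ _ g lin_g).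
have -> : f x = fL x by [].
have -> : g x = gL x by [].
by rewrite (h_unique fL) ?(h_unique gL) => // d e; rewrite eq_fg.
Qed.

Section TensorInduction.
Variable P : T -> Prop.
Hypotheses (P0 : P 0) (P_lin : forall a x y, P x -> P y -> P (a *: x + y)).

Let subspace_pred : {pred T} := fun x => `[< P x >].

Let subspace_pred_submod_closed : GRing.submod_closed subspace_pred.
Proof.
split; first exact/asboolP.
by move=> a x y /asboolP Px /asboolP Py; apply/asboolP; exact: P_lin.
Qed.

HB.instance Definition _ := GRing.isSubmodClosed.Build K T subspace_pred
  (GRing.submod_closed_semi subspace_pred_submod_closed).

Record subspace := Subspace {
  subspace_val : T;
  _ : subspace_val \in subspace_pred }.
HB.instance Definition _ := [isSub for subspace_val].
HB.instance Definition _ := [Choice of subspace by <:].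
HB.instance Definition _ := [SubChoice_isSubLmodule of subspace by <:].

(* Factor t through the submodule spanned by the pure tensors; the uniqueness
   clause then forces the corestriction to be the identity. *)
Lemma tensor_ind : (forall d e, P (t d e)) -> forall x, P x.
Proof.
move=> P_t x.
pose t' d e : subspace := Subspace (introT (asboolP _) (P_t d e)).
have t'_bb : bilinear_balanced bD bE t'.
  case: tensorT => -[tl tr tbal] _; split.
  - by move=> e a d d'; apply: val_inj; rewrite /= tl.
  - by move=> d a e e'; apply: val_inj; rewrite /= tr.
  - by move=> d b e; apply: val_inj; rewrite /= tbal.
have [g [g_t _]] := tensorT.2 _ _ t'_bb.
have lin_id : linear (@id T) by [].
have lin_vg : linear (fun x => subspace_val (g x)) by move=> a u v; rewrite !linearP.
have <- := tensor_linear_ext lin_vg lin_id (fun d e => congr1 val (g_t d e)) x.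
exact/asboolP/(valP (g x)).
Qed.

End TensorInduction.
End TensorOver.

Lemma mulr_linear (K : fieldType) (A : algType K) (x : A) : linear ( *%R x).
Proof. by move=> a u v; rewrite mulrDr scalerAr. Qed.

Section Fusion.
Variables (K : fieldType) (B : comAlgType K) (D E : algType K).
Variables (bD : B -> D) (bE : B -> E) (T : algType K) (t : D -> E -> T).
Hypothesis tensorT : is_tensor_algebra bD bE t.

Lemma tensor_mul1l d x y : t d 1 * t x y = t (d * x) y.
Proof. by case: tensorT => _ _ t_mul; rewrite -t_mul mul1r. Qed.

Lemma tensor_mul1r e x y : t 1 e * t x y = t x (e * y).
Proof. by case: tensorT => _ _ t_mul; rewrite -t_mul mul1r. Qed.

Lemma tensor_pure_mul d e : t d e = t d 1 * t 1 e.
Proof. by rewrite tensor_mul1l mulr1. Qed.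

Lemma fusion_mulr f : fusion bD bE t f -> exists xi, f =1 *%R xi.
Proof.
have [tensor_over _ _] := tensorT.
elim=> {f}.
- move=> f [[d [_ [lin_f f_t]]]|[e [_ [lin_f f_t]]]].
  + exists (t d 1); apply: (tensor_linear_ext tensor_over lin_f (mulr_linear _)).
    by move=> x y; rewrite f_t tensor_mul1l.
  + exists (t 1 e); apply: (tensor_linear_ext tensor_over lin_f (mulr_linear _)).
    by move=> x y; rewrite f_t tensor_mul1r.
- by exists 1 => eta; rewrite mul1r.
- move=> a f g _ [xf eq_f] _ [xg eq_g]; exists (a *: xf + xg) => eta.
  by rewrite eq_f eq_g /= mulrDl scalerAl.
- move=> f g _ [xf eq_f] _ [xg eq_g]; exists (xf * xg) => eta.
  by rewrite /= eq_g eq_f /= mulrA.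
- by move=> f g _ [xi eq_f] eq_fg; exists xi => eta; rewrite -eq_fg eq_f.
Qed.

Hypotheses (bD_central : forall b x, bD b * x = x * bD b)
           (bE_central : forall b y, bE b * y = y * bE b).

Lemma mulr_fusion xi : fusion bD bE t ( *%R xi).
Proof.
have [tensor_over _ _] := tensorT.
pose P x := fusion bD bE t ( *%R x).
have P0 : P 0.
  apply: (gen_ext (gen_lin (-1) (gen_id _) (gen_id _))) => x.
  by rewrite mul0r scaleN1r addNr.
have P_lin a x y : P x -> P y -> P (a *: x + y).
  by move=> Px Py; apply: (gen_ext (gen_lin a Px Py)) => z; rewrite mulrDl scalerAl.
apply: (tensor_ind tensor_over P0 P_lin) => d e.
apply: (gen_ext (gen_comp (f := *%R (t d 1)) (g := *%R (t 1 e))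
  (gen_base _) (gen_base _))) => [| |z].
- left; exists d; split; first by move=> b; rewrite bD_central.
  by split; [exact: mulr_linear | move=> x y; rewrite tensor_mul1l].
- right; exists e; split; first by move=> b; rewrite bE_central.
  by split; [exact: mulr_linear | move=> x y; rewrite tensor_mul1r].
- by rewrite /= mulrA -tensor_pure_mul.
Qed.

End Fusion.

Theorem mainTheorem3 (K : fieldType) (A B C : comAlgType K) (D E : algType K)
    (alphaA : {lrmorphism A -> D}) (alphaB : {lrmorphism B -> D})
    (betaB : {lrmorphism B -> E}) (betaC : {lrmorphism C -> E})
    (hA : forall a x, alphaA a * x = x * alphaA a)
    (hB : forall b x, alphaB b * x = x * alphaB b)
    (hB' : forall b y, betaB b * y = y * betaB b)
    (hC : forall c y, betaC c * y = y * betaC c)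
    (T : algType K) (t : D -> E -> T)
    (hT : is_tensor_algebra alphaB betaB t) :
  let rho := fun xi eta : T => xi * eta in
  ((forall a xi xi' eta, rho (a *: xi + xi') eta = a *: rho xi eta + rho xi' eta) /\
      (forall xi, linear (rho xi)) /\
      (forall eta, rho 1 eta = eta) /\
      (forall xi xi' eta, rho (xi * xi') eta = rho xi (rho xi' eta)) /\
      (forall xi xi', (forall eta, rho xi eta = rho xi' eta) -> xi = xi') /\
    (forall f : T -> T,
         fusion alphaB betaB t f <-> exists xi : T, forall eta, f eta = rho xi eta)).
Proof.
move=> rho; split; first by move=> a xi xi' eta; rewrite /rho mulrDl scalerAl.
split; first exact: mulr_linear.
split; first exact: mul1r.
split; first by move=> xi xi' eta; rewrite /rho mulrA.
split; first by move=> xi xi' /(_ 1); rewrite /rho !mulr1.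
move=> f; split; first exact: fusion_mulr.
by case=> xi eq_f; apply: (gen_ext (mulr_fusion hT hB hB' xi)) => eta; rewrite eq_f.
Qed.
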